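(* Let $1>\delta_1>\delta_2>0$. Consider the S6V model with any boundary data having no arrow incoming from $(1,0)$, and let $Q$ be the second class particle starting from $(1,0)$. Let $x>10$ be an integer and let $y_Q$ be the height at which $Q$ crosses the line $\{(i,j):i=x+\frac12\}$. Then there are constants $C,c>0$ such that for all $k\ge100x\delta_1$, $$\mathbb{P}[y_Q\le x-k]\le C\mathrm{e}^{-ck}.$$
   Context: S6V model: vertices $(i,j)\in\mathbb{Z}_{>0}^2$ with incoming edges from left and below, outgoing to right and up; boundary data specify which edges $(0,j)\to(1,j)$ and $(i,0)\to(i,1)$ carry an arrow (incoming from $(0,j)$, resp. $(i,0)$). Vertices sampled on antidiagonals: none in gives none out; two in gives both out; a single arrow from below exits up w.p. $\delta_1$, right w.p. $1-\delta_1$; a single arrow from the left exits right w.p. $\delta_2$, up w.p. $1-\delta_2$. Second class particle from $v_0$: with $\xi_0^+$ equal to the boundary data plus an arrow from $v_0$, run both models with shared Bernoulli decisions at each vertex (basic coupling); edges present in the $\xi_0^+$ model but not in the original model form one up-right path from $v_0$. *)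

From HB Require Import structures.
From mathcomp Require Import all_boot all_order all_algebra.
From mathcomp Require Import all_classical all_reals all_analysis.
Set Implicit Arguments. Unset Strict Implicit. Unset Printing Implicit Defensive.
Import Order.TTheory GRing.Theory Num.Theory.
Local Open Scope ring_scope.

(* Randomness at a vertex: a pair (b1, b2) of independent Bernoulli
   decisions, b1 ~ Ber(delta1) used when a single arrow enters from below
   (true = exit up), b2 ~ Ber(delta2) used when a single arrow enters from
   the left (true = exit right).  Both coupled models use the same pair
   (basic coupling). *)

(* Vertex rule: inputs (from left, from below), decisions (b1,b2);
   output (to the right, up). *)
Definition s6v_step (aleft abelow b1 b2 : bool) : bool * bool :=
  match aleft, abelow with
  | false, false => (false, false)
  | true, true => (true, true)
  | false, true => if b1 then (false, true) else (true, false)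
  | true, false => if b2 then (true, false) else (false, true)
  end.

(* Outputs of the vertices (i, j) of row j, given the arrows entering the
   row from below ([below i] = arrow on edge (i,j-1)->(i,j)), the left
   boundary [bL] ([bL j] = arrow on edge (0,j)->(1,j)) and the decisions
   [om i j].  [row_out .. 0] has first component [bL j] (the "right output"
   of the fictitious vertex (0,j)). *)
Fixpoint row_out (bL : nat -> bool) (below : nat -> bool) (j : nat)
  (om : nat -> nat -> bool * bool) (i : nat) : bool * bool :=
  match i with
  | 0 => (bL j, false)
  | i'.+1 =>
      let left := (row_out bL below j om i').1 in
      s6v_step left (below i) (om i j).1 (om i j).2
  end.

(* [s6v bL bB om j i] = (arrow on edge (i,j)->(i+1,j), arrow on edge
   (i,j)->(i,j+1)) for i, j >= 1.  Row 0 encodes the bottom boundary: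
   [(s6v bL bB om 0 i).2 = bB i] = arrow on edge (i,0)->(i,1). *)
Fixpoint s6v (bL bB : nat -> bool) (om : nat -> nat -> bool * bool)
  (j : nat) : nat -> bool * bool :=
  match j with
  | 0 => fun i => (false, bB i)
  | j'.+1 => row_out bL (fun i => (s6v bL bB om j' i).2) j om
  end.

Definition add_v10 (bB : nat -> bool) : nat -> bool :=
  fun i => if i == 1%N then true else bB i.

(* The second class particle Q from (1,0) crosses the line i = x + 1/2 at
   height y: the edge (x,y)->(x+1,y) is present in the xi_0^+ model but
   not in the original one. *)
Definition Q_crosses_at (bL bB : nat -> bool) (om : nat -> nat -> bool * bool)
  (x y : nat) : bool :=
  (s6v bL (add_v10 bB) om y x).1 && ~~ (s6v bL bB om y x).1.

(* Event {y_Q <= m} (y_Q = +oo if Q never crosses, then the event fails). *)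
Definition yQ_le (bL bB : nat -> bool) (om : nat -> nat -> bool * bool)
  (x m : nat) : bool :=
  [exists y : 'I_m, Q_crosses_at bL bB om x y.+1].

Definition ext_om (X M : nat) (f : {ffun 'I_X * 'I_M -> bool * bool})
  (i j : nat) : bool * bool :=
  match (insub i.-1 : option 'I_X), (insub j.-1 : option 'I_M) with
  | Some a, Some b => if (0 < i)%N && (0 < j)%N then f (a, b) else (false, false)
  | _, _ => (false, false)
  end.

Definition box_weight (R : realType) (d1 d2 : R) (X M : nat)
  (f : {ffun 'I_X * 'I_M -> bool * bool}) : R :=
  \prod_(v : 'I_X * 'I_M)
     ((if (f v).1 then d1 else 1 - d1) * (if (f v).2 then d2 else 1 - d2)).

Definition box_prob (R : realType) (d1 d2 : R) (X M : nat)
  (E : (nat -> nat -> bool * bool) -> bool) : R :=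
  \sum_(f : {ffun 'I_X * 'I_M -> bool * bool} | E (ext_om f))
     box_weight d1 d2 f.

(* P[y_Q <= m] for the crossing of the line i = x + 1/2: the event only
   depends on vertices (i,j) with i <= x, j <= m. *)
Definition prob_yQ_le (R : realType) (d1 d2 : R) (bL bB : nat -> bool)
  (x m : nat) : R :=
  box_prob d1 d2 x m (fun om => yQ_le bL bB om x m).

From mathcomp Require Import all_boot all_order all_algebra.
From mathcomp Require Import all_classical all_reals all_analysis.
From mathcomp Require Import zify ring lra.
Import Order.TTheory GRing.Theory Num.Theory.

(* Under the basic coupling the two models differ along a single up-right path
   from (1,1), the trajectory of Q, and the models are ordered along the way.
   A discrepancy can pass straight through a vertex only if the decision there
   lets a single arrow go straight, which has probability
   p = d1 + d2 - d1 d2 <= 2 d1, independently at distinct vertices.  If Q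
   crosses the line i = x + 1/2 at height y <= x - k, at least k of its first
   2x steps are straight; since the set S of straight steps determines the
   path, a union bound over S gives
     P[y_Q <= x - k] <= sum_{|S| >= k} p^|S| <= l^-k (1 + l p)^(2x),
   and l = e^(1/2) together with k >= 100 x d1 makes this at most e^(-k/4). *)

Definition step (p : nat * nat) (up : bool) : nat * nat :=
  if up then (p.1, p.2.+1) else (p.1.+1, p.2).

Lemma eq_step_state p q u b :
  ((step p u, u) == (step q b, b)) = (p == q) && (u == b).
Proof.
case: p q => [p1 p2] [q1 q2]; rewrite /step.
by case: u; case: b; rewrite !xpair_eqE /= ?eqSS ?andbT ?andbF.
Qed.

(* A walk state [(p, up)]: [p] is the vertex just entered and [up] tells
   whether it was entered from below.  Step [t] keeps the direction of the
   previous one iff [straight t]. *)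
Fixpoint walk (straight : pred nat) (t : nat) : (nat * nat) * bool :=
  if t is t'.+1 then
    let w := walk straight t' in
    let up := w.2 == straight t' in (step w.1 up, up)
  else ((1, 1), true).

Lemma walk_site s t :
  [/\ 0 < (walk s t).1.1, 0 < (walk s t).1.2 & (walk s t).1.1 + (walk s t).1.2 = t.+2].
Proof.
elim: t => [|t IH] //=; case: (walk s t) IH => [[i j] u] /= [? ? ?].
by case: (u == s t) => /=; split; lia.
Qed.

Lemma walk_ext s1 s2 t :
  (forall u, u < t -> s1 u = s2 u) -> walk s1 t = walk s2 t.
Proof.
elim: t => [|t IH] //= eq_s; rewrite IH ?eq_s // => u ut.
by apply: eq_s; apply: ltnW.
Qed.

Lemma walk_count s t :
  (walk s t).1.1 <= \sum_(u < t) s u + (walk s t).1.2 + ~~ (walk s t).2.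
Proof.
elim: t => [|t IH]; first by rewrite big_ord0.
rewrite big_ord_recr /=; case: (walk s t) IH => [[i j] u] /=.
by case: u; case: (s t) => /=; lia.
Qed.

Definition cert_site {N} (S : {set 'I_N}) (t : 'I_N) : nat * nat :=
  (walk [pred n | n \in map val (enum S)] t).1.

Lemma cert_site_inj N (S : {set 'I_N}) : injective (cert_site S).
Proof.
move=> t1 t2 eq12; apply: val_inj.
have [_ _ s1] := walk_site [pred n | n \in map val (enum S)] t1.
have [_ _ s2] := walk_site [pred n | n \in map val (enum S)] t2.
rewrite /cert_site in eq12; rewrite eq12 in s1.
by apply/succn_inj/succn_inj; rewrite -s1 -s2.
Qed.

Lemma sum_ord_le_card (s : pred nat) n N :
  n <= N -> \sum_(u < n) s u <= #|[set t : 'I_N | s t]|.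
Proof.
move=> nN; rewrite (big_ord_widen N (fun u => nat_of_bool (s u)) nN).
rewrite -sum1_card big_mkcond [leqRHS]big_mkcond /=.
by apply: leq_sum => t _; rewrite inE; case: (t < n); case: (s t).
Qed.

(* [e]: the discrepancy enters the vertex, from below iff [up].  The decisions
   [c1], [c2] are exactly those letting a single arrow go straight, and a
   discrepancy keeps its direction only if one of them is used. *)
Lemma s6v_step_coupled (c1 c2 : bool) {lo lp bo bp e up : bool} :
  lo ==> lp -> bo ==> bp -> (lp != lo) = e && ~~ up -> (bp != bo) = e && up ->
  let O := s6v_step lo bo c1 c2 in let P := s6v_step lp bp c1 c2 in
  let up' := P.2 && ~~ O.2 in
  [/\ O.1 ==> P.1, O.2 ==> P.2, (P.1 != O.1) = e && ~~ up',
      (P.2 != O.2) = e && up' & [&& e & up' == up] ==> c1 || c2].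
Proof. by case: c1 c2 lo lp bo bp e up => [] [] [] [] [] [] [] []. Qed.

Definition good (a : bool * bool) := a.1 || a.2.

Definition good_at (om : nat -> nat -> bool * bool) (v : nat * nat) := good (om v.1 v.2).

Section SecondClassParticle.
Variables (bL bB : nat -> bool) (om : nat -> nat -> bool * bool).
Hypothesis bB1 : bB 1 = false.

Definition out (b : nat -> bool) (v : nat * nat) := s6v bL b om v.2 v.1.
Local Notation O := (out bB).
Local Notation P := (out (add_v10 bB)).

Lemma out_rec b i j : out b (i.+1, j.+1) =
  s6v_step (out b (i, j.+1)).1 (out b (i.+1, j)).2 (om i.+1 j.+1).1 (om i.+1 j.+1).2.
Proof. by []. Qed.

Lemma out_left b j : out b (0, j.+1) = (bL j.+1, false).
Proof. by []. Qed.

Lemma out_bottom b i : out b (i, 0) = (false, b i).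
Proof. by []. Qed.

Definition up_disc v := (P v).2 && ~~ (O v).2.

Fixpoint qpath t : (nat * nat) * bool :=
  if t is t'.+1 then let p := (qpath t').1 in (step p (up_disc p), up_disc p)
  else ((1, 1), true).

Definition straight t := (qpath t).2 == up_disc (qpath t).1.

Lemma qpath_walk t : qpath t = walk straight t.
Proof.
elim: t => [|t IH] //=; rewrite /straight -IH.
by case: (qpath t).2; case: (up_disc _).
Qed.

Lemma qpath_site t :
  [/\ 0 < (qpath t).1.1, 0 < (qpath t).1.2 & (qpath t).1.1 + (qpath t).1.2 = t.+2].
Proof. by rewrite qpath_walk; apply: walk_site. Qed.

Definition coupled_at (w : (nat * nat) * bool) (v : nat * nat) : Prop :=
  [/\ (O v).1 ==> (P v).1, (O v).2 ==> (P v).2,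
      ((P v).1 != (O v).1) = (w == (step v false, false))
    & ((P v).2 != (O v).2) = (w == (step v true, true))].

Lemma coupled_vertex {w : (nat * nat) * bool} {i j : nat} :
  coupled_at w (i, j.+1) -> coupled_at w (i.+1, j) ->
  let v := (i.+1, j.+1) in let enter := w.1 == v in
  [/\ (O v).1 ==> (P v).1, (O v).2 ==> (P v).2,
      ((P v).1 != (O v).1) = enter && ~~ up_disc v,
      ((P v).2 != (O v).2) = enter && up_disc v
    & [&& enter & up_disc v == w.2] ==> good_at om v].
Proof.
case: w => q u [l1 _ l3 _] [_ b2 _ b4].
rewrite !xpair_eqE eqb_id eqbF_neg in l3 b4.
have := s6v_step_coupled (om i.+1 j.+1).1 (om i.+1 j.+1).2 l1 b2 l3 b4.
by rewrite -!out_rec; apply.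
Qed.

Lemma qpath_coupled n v : v.1 + v.2 = n.+1 -> coupled_at (qpath n) v.
Proof.
elim: n v => [|n IH] [[|i] [|j]] //= sum_ij; rewrite /coupled_at.
- have -> : j = 0 by lia.
  by rewrite !out_left !xpair_eqE eqxx implybb; split.
- have -> : i = 0 by lia.
  by rewrite !out_bottom /add_v10 /= bB1 !xpair_eqE; split.
- lia.
- have [q_gt0 _ _] := qpath_site n.
  have /negbTE q_ne : (qpath n).1 != (0, j.+1) by apply/eqP => qE; rewrite qE in q_gt0.
  by rewrite !eq_step_state q_ne !out_left eqxx implybb; split.
- have [_ q_gt0 _] := qpath_site n.
  have /negbTE q_ne : (qpath n).1 != (i.+1, 0) by apply/eqP => qE; rewrite qE in q_gt0.
  have /negbTE i_ne1 : i.+1 != 1 by lia.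
  rewrite !eq_step_state q_ne !out_bottom /add_v10 i_ne1.
  by split => //; rewrite ?eqxx //; apply: implybb.
- have [] := coupled_vertex (IH (i, j.+1) ltac:(rewrite /=; lia))
                            (IH (i.+1, j) ltac:(rewrite /=; lia)).
  move=> o1 o2 o3 o4 _; split => //; rewrite eq_step_state ?o3 ?o4.
  all: by case: eqP => [-> | _] //=; rewrite ?eqbF_neg ?eqb_id.
Qed.

Lemma straight_good t : straight t -> good_at om (qpath t).1.
Proof.
rewrite /straight; have [] := qpath_site t.
case: (qpath t) (qpath_coupled t) => [[[|i] [|j]] u] //= coupled _ _ sum_ij st.
have [] := coupled_vertex (coupled (i, j.+1) ltac:(rewrite /=; lia))
                          (coupled (i.+1, j) ltac:(rewrite /=; lia)).
by move=> _ _ _ _ /implyP; apply; rewrite /= eqxx eq_sym.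
Qed.

Lemma qpath_crossing n x y :
  x + y = n.+1 -> Q_crosses_at bL bB om x y -> qpath n = ((x.+1, y), false).
Proof.
move=> sum_xy /andP[crossP crossO].
have [_ _ right_disc _] := qpath_coupled n (x, y) sum_xy.
by apply/eqP; rewrite -right_disc; apply: contraNneq crossO => <-.
Qed.

Lemma yQ_le_certificate x k m :
  m <= x - k -> yQ_le bL bB om x m ->
  exists2 S : {set 'I_(2 * x)}, k <= #|S| & [forall t in S, good_at om (cert_site S t)].
Proof.
move=> m_le /existsP[y /(qpath_crossing (x + y)) cross].
have {cross}cross := cross (addnS x y).
have y_lt : y < x - k by apply: leq_trans (ltn_ord y) m_le.
exists [set t : 'I_(2 * x) | straight t].
  have := walk_count straight (x + y); rewrite -qpath_walk cross /=.
  have /(sum_ord_le_card straight) : x + y <= 2 * x by lia.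
  set straight_before := (\sum_(u < x + y) _)%N; set card_S := #|_|; lia.
apply/forall_inP => t; rewrite inE => st_t.
suff -> : cert_site [set u : 'I_(2 * x) | straight u] t = (qpath t).1 by apply: straight_good.
rewrite /cert_site qpath_walk; congr (_.1); apply: walk_ext => u u_lt.
have u_lt' : u < 2 * x by apply: ltn_trans u_lt (ltn_ord t).
by rewrite inE -[u]/(val (Ordinal u_lt')) (mem_map val_inj) mem_enum inE.
Qed.

End SecondClassParticle.

Local Open Scope ring_scope.

Lemma chernoff_sum_expr_card (R : numFieldType) (T : finType) (a lam : R) k :
  0 <= a -> 1 <= lam ->
  \sum_(S : {set T} | (k <= #|S|)%N) a ^+ #|S| <= lam ^- k * (1 + lam * a) ^+ #|T|.
Proof.
move=> a_ge0 lam_ge1; have lam_gt0 : 0 < lam by apply: lt_le_trans lam_ge1.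
have lam_ge0 := ltW lam_gt0.
have binomial : (1 + lam * a) ^+ #|T| = \sum_(S : {set T}) (lam * a) ^+ #|S|.
  rewrite -prodr_const addrC bigA_distr; apply: eq_bigr => S _.
  by rewrite -big_mkcond prodr_const.
rewrite binomial mulr_sumr [leRHS](bigID (fun S : {set T} => (k <= #|S|)%N)) /=.
rewrite -[leLHS]addr0; apply: lerD; last first.
  apply: sumr_ge0 => S _.
  by apply: mulr_ge0; [rewrite invr_ge0 | ]; apply: exprn_ge0; rewrite ?mulr_ge0.
apply: ler_sum => S k_le.
rewrite exprMn mulrA -{2}(subnKC k_le) exprD mulKf ?expf_neq0 ?gt_eqF //.
by apply: ler_peMl; [exact: exprn_ge0 | exact: exprn_ege1].
Qed.

Definition in_box X M (v : nat * nat) :=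
  [&& (0 < v.1)%N, (v.1 <= X)%N, (0 < v.2)%N & (v.2 <= M)%N].

Definition box_index X M (v : nat * nat) : 'I_X.+1 * 'I_M.+1 :=
  (inord v.1.-1, inord v.2.-1).

Lemma box_index_inj X M : {in in_box X.+1 M.+1 &, injective (@box_index X M)}.
Proof.
move=> [a b] [c d] /and4P[/= ? ? ? ?] /and4P[/= ? ? ? ?].
case=> /(congr1 val) e1 /(congr1 val) e2.
by rewrite /= !inordK in e1 e2; [congr (_, _); lia | lia ..].
Qed.

Lemma ext_omE X M (f : {ffun 'I_X.+1 * 'I_M.+1 -> bool * bool}) v :
  ext_om f v.1 v.2 = if in_box X.+1 M.+1 v then f (box_index X M v) else (false, false).
Proof.
rewrite /ext_om /in_box; case: v => [[|i] [|j]] /=.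
1-3: by do 2?case: (insub _) => [?|]; rewrite ?andbF.
have [i_lt | i_ge] := ltnP i X.+1; last first.
  by rewrite insubF ltnS leqNgt ?i_ge // ltnNge i_ge.
have [j_lt | j_ge] := ltnP j M.+1; last first.
  by rewrite (insubT (fun n => n < X.+1)%N i_lt) insubF // ltnNge j_ge.
rewrite (insubT (fun n => n < X.+1)%N i_lt) (insubT (fun n => n < M.+1)%N j_lt) /=.
by congr (f (_, _)); apply: val_inj; rewrite /= inordK.
Qed.

Section BoxProbability.
Context {R : realType} (d1 d2 : R).
Hypotheses (d1_01 : 0 <= d1 <= 1) (d2_01 : 0 <= d2 <= 1).

Definition site_weight (a : bool * bool) : R :=
  (if a.1 then d1 else 1 - d1) * (if a.2 then d2 else 1 - d2).

Definition good_prob : R := d1 + d2 - d1 * d2.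

Lemma good_prob_ge0 : 0 <= good_prob.
Proof. by move: d1_01 d2_01 => /andP[? ?] /andP[? ?]; rewrite /good_prob; nra. Qed.

Lemma box_weight_ge0 X M (f : {ffun 'I_X * 'I_M -> bool * bool}) :
  0 <= box_weight d1 d2 f.
Proof.
apply: prodr_ge0 => v _; move: d1_01 d2_01 => /andP[? ?] /andP[? ?].
by apply: mulr_ge0; case: ifP => _; lra.
Qed.

Lemma box_weight_all_good X M (V : {set 'I_X * 'I_M}) :
  \sum_(f : {ffun 'I_X * 'I_M -> bool * bool} | [forall v in V, good (f v)])
    box_weight d1 d2 f = good_prob ^+ #|V|.
Proof.
pose Q v a := (v \notin V) || good a.
rewrite (eq_bigl (fun f => f \in family Q)); last first.
  move=> f; apply/forall_inP/familyP => [all_good v | all_good v v_in].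
    by rewrite /Q; case: (boolP (v \in V)) => //= /all_good.
  by have := all_good v; rewrite /Q v_in.
rewrite /box_weight -(bigA_distr_big_dep Q (fun _ a => site_weight a)) -prodr_const.
rewrite [RHS]big_mkcond /=; apply: eq_bigr => v _.
have sum_pairs (F : bool * bool -> R) :
    \sum_a F a = F (true, true) + F (true, false) + (F (false, true) + F (false, false)).
  rewrite (eq_bigr (fun p => F (p.1, p.2))); last by case.
  by rewrite -(pair_bigA _ (fun a b => F (a, b))) /= !big_bool.
rewrite /Q; case: (v \in V) => /=.
  by rewrite big_mkcond sum_pairs /site_weight /good_prob /=; ring.
by rewrite sum_pairs /site_weight /=; ring.
Qed.

Lemma box_prob_le_sum X M (I : finType) (P : pred I)
    (A : I -> (nat -> nat -> bool * bool) -> bool) (E : (nat -> nat -> bool * bool) -> bool) :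
  (forall om, E om -> exists2 i, P i & A i om) ->
  box_prob d1 d2 X M E <= \sum_(i | P i) box_prob d1 d2 X M (A i).
Proof.
move=> cover; rewrite /box_prob (exchange_big_dep xpredT) //= [leLHS]big_mkcond.
apply: ler_sum => f _; case: ifP => [/cover[i Pi Ai] | _]; last first.
  by apply: sumr_ge0 => i _; apply: box_weight_ge0.
rewrite (bigD1 i) ?Pi ?Ai //= lerDl.
by apply: sumr_ge0 => j _; apply: box_weight_ge0.
Qed.

Lemma box_prob_good_sites X M (T : finType) (S : {set T}) (G : T -> nat * nat) :
  {in S &, injective G} ->
  box_prob d1 d2 X.+1 M.+1 (fun om => [forall t in S, good_at om (G t)]) <= good_prob ^+ #|S|.
Proof.
move=> G_inj; rewrite /box_prob.
have [in_box_S | /forall_inPn[t t_in t_out]] :=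
  boolP [forall t in S, in_box X.+1 M.+1 (G t)].
  have index_inj : {in S &, injective (box_index X M \o G)}.
    move=> t1 t2 t1_in t2_in /box_index_inj eq12; apply: G_inj => //.
    by apply: eq12; apply: (forall_inP in_box_S).
  rewrite -(card_in_imset index_inj) -box_weight_all_good le_eqVlt; apply/orP; left.
  apply/eqP/eq_bigl => f; apply/forall_inP/forall_inP => [all_good v | all_good t t_in].
    case/imsetP=> t t_in ->; have := all_good t t_in.
    by rewrite /good_at ext_omE (forall_inP in_box_S).
  by rewrite /good_at ext_omE (forall_inP in_box_S) //; apply: all_good; apply: imset_f.
rewrite big_pred0 ?exprn_ge0 ?good_prob_ge0 // => f.
by apply/negbTE/forall_inPn; exists t => //; rewrite /good_at ext_omE (negbTE t_out).
Qed.

Lemma prob_yQ_le_chernoff bL bB x k (lam : R) :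
  bB 1%N = false -> 1 <= lam ->
  prob_yQ_le d1 d2 bL bB x (x - k) <= lam ^- k * (1 + lam * good_prob) ^+ (2 * x).
Proof.
move=> bB1 lam_ge1; rewrite /prob_yQ_le.
have lam_ge0 : 0 <= lam by apply: le_trans lam_ge1.
case E: (x - k)%N => [|m].
  rewrite /box_prob big_pred0; last by move=> f; apply/existsP => -[[]].
  apply: mulr_ge0; first by rewrite invr_ge0 exprn_ge0.
  by rewrite exprn_ge0 // addr_ge0 // mulr_ge0 // good_prob_ge0.
have m_le : (m.+1 <= x - k)%N by rewrite E.
case: x E m_le => [|x] E m_le; first by rewrite sub0n in E.
apply: le_trans (box_prob_le_sum _ _ _ (fun S : {set 'I_(2 * x.+1)} => (k <= #|S|)%N)
  (fun S om => [forall t in S, good_at om (cert_site S t)]) _ _) _.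
  by move=> om; apply: yQ_le_certificate.
apply: le_trans
  (_ : _ <= \sum_(S : {set 'I_(2 * x.+1)} | (k <= #|S|)%N) good_prob ^+ #|S|) _.
  by apply: ler_sum => S _; apply: box_prob_good_sites; apply: in2W; apply: cert_site_inj.
rewrite -[in X in _ <= _ * _ ^+ X](card_ord (2 * x.+1)).
by apply: chernoff_sum_expr_card; rewrite ?good_prob_ge0.
Qed.

End BoxProbability.

Lemma half_tilt_le_expR (R : realType) (a : R) (N k : nat) :
  0 <= a -> 2 * N%:R * a <= k%:R / 4 ->
  expR (1 / 2) ^- k * (1 + expR (1 / 2) * a) ^+ N <= expR (- (1 / 4 * k%:R)).
Proof.
set lam := expR (1 / 2) => a_ge0 Na_le.
have lam_ge0 : 0 <= lam := expR_ge0 _.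
have lam_le2 : lam <= 2.
  have lam_inv : lam * expR (- (1 / 2)) = 1 by rewrite -expRD subrr expR0.
  have := expR_ge1Dx (- (1 / 2) : R); nra.
rewrite (_ : lam ^- k = expR (- (k%:R * (1 / 2)))); last by rewrite expRN expRM_natl.
apply: le_trans (_ : _ <= expR (- (k%:R * (1 / 2))) * expR (lam * a) ^+ N) _.
  rewrite ler_wpM2l ?expR_ge0 // lerXn2r ?nnegrE ?expR_ge0 ?expR_ge1Dx //.
  by rewrite addr_ge0 ?mulr_ge0.
rewrite -expRM_natl -expRD ler_expR.
have : N%:R * (lam * a) <= N%:R * (2 * a) by rewrite ler_wpM2l // ler_wpM2r.
nra.
Qed.

Theorem proposition5p8 (R : realType) (d1 d2 : R) :
  0 < d2 -> d2 < d1 -> d1 < 1 ->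
  exists C c : R, 0 < C /\ 0 < c /\
    forall (bL bB : nat -> bool), bB 1%N = false ->
    forall x : nat, (10 < x)%N ->
    forall k : nat, 100 * x%:R * d1 <= k%:R ->
      prob_yQ_le d1 d2 bL bB x (x - k) <= C * expR (- (c * k%:R)).
Proof.
move=> d2_gt0 d2_lt_d1 d1_lt1.
have d1_01 : 0 <= d1 <= 1 by apply/andP; split; lra.
have d2_01 : 0 <= d2 <= 1 by apply/andP; split; lra.
exists 1, (1 / 4); do 2!split=> //; move=> bL bB bB1 x _ k k_ge; rewrite mul1r.
have lam_ge1 : 1 <= expR (1 / 2) :> R by rewrite ltW // expR_gt1.
apply: le_trans (prob_yQ_le_chernoff _ _ d1_01 d2_01 bL bB x k _ bB1 lam_ge1) _.
have p_ge0 := good_prob_ge0 _ _ d1_01 d2_01.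
have p_le : good_prob d1 d2 <= 2 * d1 by rewrite /good_prob; nra.
apply: half_tilt_le_expR => //; rewrite natrM.
have x_ge0 : 0 <= x%:R :> R by [].
nra.
Qed.
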